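(* Let $m,n\geq1$. The quiver $\mathrm Q_m^n$ is the double quiver of the graph $\Gamma_m^n$: it has the same vertices, and for each edge of $\Gamma_m^n$ between $e_\lambda$ and $e_\mu$ it has exactly one arrow from $e_\lambda$ to $e_\mu$ and exactly one arrow from $e_\mu$ to $e_\lambda$, and it has no other arrows.
   Context: Fix a field $\Bbbk$. A weight of type $(m,n)$ is a word in $\vee$ (''down'') and $\wedge$ (''up'') with $m$ letters $\vee$ and $n$ letters $\wedge$; $\Lambda_m^n$ is the set of weights. Place the $m+n$ points on a horizontal line. A cup diagram is a collection of pairwise non-intersecting curves below the line, each a cup (lower semicircle joining two points) or a half-line (ray going down), each point on exactly one curve; a cap diagram is the mirror image. $\underline{\lambda}$: repeatedly join neighbouring $\vee\wedge$ pairs ($\vee$ left) by cups, ignoring joined points, half-lines elsewhere; $\overline\lambda$ its mirror image. An arc diagram $\underline\alpha\lambda\overline\beta$ ($\alpha,\beta,\lambda\in\Lambda_m^n$; cup diagram of $\alpha$ below, cap diagram of $\beta$ above, labels $\lambda$) requires every cup/cap to join a $\vee$ and a $\wedge$ (labels orient components: $\vee$ down, $\wedge$ up) and no two half-lines on the same side at positions $i<j$ labelled $\vee,\wedge$. A cup/cap is clockwise if its left endpoint is $\wedge$; the degree is the number of clockwise cups and caps. The degree-0 arc diagrams are exactly $e_\lambda:=\underline\lambda\lambda\overline\lambda$; gluing each cup of $\underline\lambda$ to its mirror cap of $\overline\lambda$ gives the (counterclockwise) circles of $e_\lambda$. $\mathrm Q_m^n$ is the quiver with vertices $\{e_\lambda\}_{\lambda\in\Lambda_m^n}$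 and one arrow from $e_\alpha$ to $e_\beta$ for each arc diagram $\underline\alpha\lambda\overline\beta$ of degree $1$. $\Gamma_m^n$ is the simple undirected graph with vertices $\{e_\lambda\}_{\lambda\in\Lambda_m^n}$ and an edge between $e_\lambda$ and $e_\mu$ if one of $\lambda,\mu$ is obtained from the other by exchanging the labels $\vee$ and $\wedge$ at the two endpoints of a $\vee\cdots\wedge$ pair lying on the same circle of its degree-zero diagram (i.e. the two endpoints of one cup of $\underline\lambda$, resp. $\underline\mu$). *)

(* Weights are bool sequences: true = "down" (vee), false = "up" (wedge).
   Positions are numbered 0, 1, ..., m+n-1 from left to right. *)
From mathcomp Require Import all_boot.
Set Implicit Arguments. Unset Strict Implicit. Unset Printing Implicit Defensive.

Definition Lambda (m n : nat) : {set (m + n).-tuple bool} :=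
  [set t : (m + n).-tuple bool | count id t == m].

(* Cups of the cup diagram underline(lambda): repeatedly join neighbouring vee-wedge pairs
   (vee on the left), ignoring already joined points.  Implemented by the usual stack
   (bracket-matching) procedure; st is the stack of not yet joined vee positions. *)
Fixpoint cups_aux (s : seq bool) (i : nat) (st : seq nat) : seq (nat * nat) :=
  match s with
  | [::] => [::]
  | b :: s' =>
      if b then cups_aux s' i.+1 (i :: st)
      else match st with
           | [::] => cups_aux s' i.+1 [::]
           | j :: st' => (j, i) :: cups_aux s' i.+1 st'
           end
  end.

Definition cups (s : seq bool) : seq (nat * nat) := cups_aux s 0 [::].

Definition on_cup (s : seq bool) (k : nat) : bool :=
  has (fun p => (p.1 == k) || (p.2 == k)) (cups s).

Definition rays (s : seq bool) : seq nat :=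
  [seq k <- iota 0 (size s) | ~~ on_cup s k].

Definition lab (lam : seq bool) (k : nat) : bool := nth false lam k.

(* Conditions on one side (cups of underline(a), or caps of overline(a)) with labels lam:
   every cup joins a vee and a wedge, and no two half-lines at positions i < j
   are labelled vee, wedge respectively. *)
Definition side_ok (a lam : seq bool) : bool :=
  all (fun p => lab lam p.1 != lab lam p.2) (cups a) &&
  all (fun i => all (fun j => ~~ [&& i < j, lab lam i & ~~ lab lam j]) (rays a)) (rays a).

Definition arc_diagram (alpha lam beta : seq bool) : bool :=
  side_ok alpha lam && side_ok beta lam.

(* number of clockwise cups (left endpoint labelled wedge) on one side *)
Definition nclockwise (a lam : seq bool) : nat :=
  count (fun p => ~~ lab lam p.1) (cups a).

Definition degree (alpha lam beta : seq bool) : nat :=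
  nclockwise alpha lam + nclockwise beta lam.

(* number of arrows e_alpha -> e_beta in the quiver Q_m^n: the number of arc diagrams
   underline(alpha) lambda overline(beta) of degree 1, lambda in Lambda_m^n *)
Definition n_arrows (m n : nat) (alpha beta : (m + n).-tuple bool) : nat :=
  #|[set lam in Lambda m n | arc_diagram alpha lam beta && (degree alpha lam beta == 1)]|.

Definition swap_at (lam : seq bool) (i j : nat) : seq bool :=
  [seq (if k == i then lab lam j else if k == j then lab lam i else lab lam k)
  | k <- iota 0 (size lam)].

Definition cup_swap (lam mu : seq bool) : bool :=
  has (fun p => mu == swap_at lam p.1 p.2) (cups lam).

Definition gamma_edge (lam mu : seq bool) : bool :=
  cup_swap lam mu || cup_swap mu lam.

(* The cups of the cup diagram of w are the pairs of the bracket matching of vees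
   (opening) against wedges (closing); the unmatched points, the rays, read wedges
   then vees.  Let lam have as many vees as w and satisfy the arc diagram conditions
   on the side of w.  Every cup of w carries one vee and one wedge of lam, so the rays
   carry as many vees under lam as under w; both ray labellings being sorted, lam and
   w agree on the rays, and also on every counterclockwise cup.  Hence that side has
   degree 0 only for lam = w, and degree 1 exactly when lam is w with the labels of
   one cup exchanged.  A degree one diagram underline(alpha) lam overline(beta) thus
   has lam = alpha with alpha a cup swap of beta, or lam = beta with beta a cup swap
   of alpha, and not both: alpha and beta would then differ exactly at the ends of a
   cup of alpha, labelled vee-wedge by alpha, and at the ends of a cup of beta,
   labelled wedge-vee by alpha. *)

From mathcomp Require Import all_boot zify.

Set Implicit Arguments.
Unset Strict Implicit.
Unset Printing Implicit Defensive.

Lemma sorted_implb_eq (x y : seq bool) :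
  size x = size y -> count id x = count id y ->
  sorted implb x -> sorted implb y -> x = y.
Proof.
move=> size_xy count_xy sorted_x sorted_y.
apply: (sorted_eq _ _ sorted_x sorted_y); [by do 3!case | by do 2!case |].
apply/allP => b _; apply/eqP.
have count_true s : count_mem true s = count id s by apply: eq_count; case.
have count_false s : count_mem false s = size s - count id s.
  by rewrite -(count_predC id s) addKn; apply: eq_count; case.
by case: b; rewrite ?count_true ?count_false ?size_xy count_xy.
Qed.

Definition cup_ends (C : seq (nat * nat)) : seq nat :=
  flatten [seq [:: p.1; p.2] | p <- C].

Lemma mem_cup_ends C k :
  (k \in cup_ends C) = has (fun p => (p.1 == k) || (p.2 == k)) C.
Proof.
elim: C => //= p C IH; rewrite /cup_ends /= -/(cup_ends C) !inE IH orbA.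
by rewrite (eq_sym k p.1) (eq_sym k p.2).
Qed.

Lemma cup_ends_uniq C : uniq (cup_ends C) -> uniq C.
Proof.
elim: C => //= c C IH; rewrite /cup_ends /= -/(cup_ends C) => /and3P [c1_notin _ uniq_C].
rewrite IH // andbT; apply: contra c1_notin => c_in.
by rewrite inE mem_cup_ends; apply/orP; right; apply/hasP; exists c; rewrite ?eqxx.
Qed.

Lemma cup_ends_inj C c d k : uniq (cup_ends C) -> c \in C -> d \in C ->
  (c.1 == k) || (c.2 == k) -> (d.1 == k) || (d.2 == k) -> c = d.
Proof.
elim: C => //= e C IH; rewrite /cup_ends /= -/(cup_ends C).
move=> /and3P [e1_notin e2_notin uniq_C].
have e_alone x : x \in C -> (x.1 == k) || (x.2 == k) -> ~~ ((e.1 == k) || (e.2 == k)).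
  move=> x_in x_k; apply/norP; split; apply/eqP => e_k.
    by move: e1_notin; rewrite inE mem_cup_ends e_k => /norP [_ /hasPn/(_ x x_in)]; rewrite x_k.
  by move: e2_notin; rewrite mem_cup_ends e_k => /hasPn/(_ x x_in); rewrite x_k.
rewrite !inE => /predU1P [->|c_in] /predU1P [->|d_in] c_k d_k //.
- by have := e_alone d d_in d_k; rewrite c_k.
- by have := e_alone c c_in c_k; rewrite d_k.
- exact: IH.
Qed.

Lemma size_swap_at lam i j : size (swap_at lam i j) = size lam.
Proof. by rewrite size_map size_iota. Qed.

Lemma lab_swap_at lam i j k : k < size lam ->
  lab (swap_at lam i j) k = if k == i then lab lam j else if k == j then lab lam i else lab lam k.
Proof. by move=> k_lt; rewrite /lab (nth_map 0) ?size_iota // nth_iota. Qed.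

Lemma count_id_lab (a : seq bool) : count id a = count (lab a) (iota 0 (size a)).
Proof. by rewrite -{1}(mkseq_nth false a) /mkseq count_map. Qed.

Lemma count_cup_ends (f : pred nat) C :
  all (fun c => f c.1 != f c.2) C -> count f (cup_ends C) = size C.
Proof.
elim: C => //= c C IH /andP [c_split C_split].
by rewrite /cup_ends /= -/(cup_ends C) IH //; case: (f c.1) (f c.2) c_split => [] [].
Qed.

Definition vee_wedge (w : seq bool) (p : nat * nat) : bool :=
  [&& p.1 < p.2, p.2 < size w, lab w p.1 & ~~ lab w p.2].

Section CupDiagram.

Variable w : seq bool.

Lemma cups_auxP s i st :
  s = drop i w -> uniq st -> all (fun k => k < i) st -> all (lab w) st ->
  [/\ uniq (cup_ends (cups_aux s i st)),
      forall k, k \in cup_ends (cups_aux s i st) -> (k \in st) || (i <= k < size w) &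
      all (vee_wedge w) (cups_aux s i st)].
Proof.
elim: s i st => [|b s IH] i st s_def uniq_st st_lt st_vee //=.
have i_lt : i < size w.
  by rewrite ltnNge; apply: contraPN s_def => /drop_oversize ->.
move: s_def; rewrite (drop_nth false i_lt) => -[b_def s_def].
have i_notin_st : i \notin st by apply/negP => /(allP st_lt); rewrite ltnn.
have st_ltS : all (fun k => k < i.+1) st by apply: sub_all st_lt => k /ltnW.
case: b b_def => b_def.
  have [] := IH i.+1 (i :: st) s_def; rewrite /= ?i_notin_st ?ltnSn /lab -?b_def //.
  move=> uniq_ends ends_sub vw; split=> // k /ends_sub; rewrite inE.
  by case: eqP => [->|_] /=; [rewrite leqnn i_lt orbT | case: (k \in st) => //=; lia].
case: st uniq_st st_lt st_vee i_notin_st st_ltS => [|x st] uniq_st st_lt st_vee i_notin_st st_ltS.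
  have [uniq_ends ends_sub vw] := IH i.+1 [::] s_def isT isT isT.
  by split=> // k /ends_sub /=; lia.
move: uniq_st st_lt st_vee i_notin_st st_ltS => /= /andP [x_notin uniq_st] /andP [x_lt st_lt]
  /andP [x_vee st_vee] /norP [i_neq_x i_notin_st] /andP [_ st_ltS].
have [uniq_ends ends_sub vw] := IH i.+1 st s_def uniq_st st_ltS st_vee.
have notin_rest k : k \notin st -> k < i.+1 -> k \notin cup_ends (cups_aux s i.+1 st).
  by move=> k_notin k_lt; apply/negP => /ends_sub; rewrite (negbTE k_notin) /=; lia.
rewrite /cup_ends /= -/(cup_ends _); split.
- rewrite /= inE eq_sym (negbTE i_neq_x) uniq_ends /= andbT.
  by rewrite !notin_rest // ltnW.
- move=> k; rewrite !inE => /or3P [/eqP ->|/eqP ->|/ends_sub]; first by rewrite eqxx.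
    by rewrite leqnn i_lt orbT.
  by case/orP => [->|]; rewrite ?orbT //; lia.
- by rewrite /= vw /vee_wedge /= x_lt i_lt x_vee /lab -b_def.
Qed.

Lemma cups_aux_maximal s i st j k :
  s = drop i w -> i <= j < size w -> ~~ lab w j -> j \notin cup_ends (cups_aux s i st) ->
  (k \in st) || [&& i <= k, k < j & lab w k] -> k \in cup_ends (cups_aux s i st).
Proof.
elim: s i st => [|b s IH] i st s_def j_range j_wedge j_free k_open.
  by have := congr1 size s_def; rewrite size_drop /=; lia.
have i_lt : i < size w by lia.
move: s_def; rewrite (drop_nth false i_lt) => -[b_def s_def].
have lab_i : lab w i = b by rewrite /lab -b_def.
have jS_range : j != i -> i.+1 <= j < size w by move: j_range; rewrite eq_sym; lia.
have kS_range : i <= k < j -> lab w k -> ~~ b -> i.+1 <= k < j.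
  move=> k_range k_vee not_b; suff : k != i by lia.
  by apply: contraTneq k_vee => ->; rewrite lab_i.
case: b lab_i b_def j_free kS_range => lab_i b_def /= j_free kS_range.
  have j_neq_i : j != i by apply: contraNneq j_wedge => ->; rewrite lab_i.
  apply: IH; rewrite ?jS_range // inE.
  case: eqVneq => //= k_neq_i; case/orP: k_open => [->//|/and3P [k_ge k_lt k_vee]].
  by rewrite k_lt k_vee !andbT orbC; lia.
case: st k_open j_free => [|x st] /= k_open j_free.
  move: k_open; rewrite andbA => /andP [k_range k_vee].
  have kS := kS_range k_range k_vee isT.
  by apply: IH => //; [lia | rewrite k_vee andbT].
move: j_free; rewrite /cup_ends /= -/(cup_ends _) !inE => /norP [_ /norP [j_neq_i j_free]].
case: eqVneq => //= k_neq_x; rewrite IH ?orbT ?jS_range //.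
move: k_open; rewrite inE (negbTE k_neq_x) /= andbA => /orP [->//|/andP [k_range k_vee]].
by rewrite k_vee andbT kS_range ?orbT.
Qed.

Lemma cupsP : uniq (cup_ends (cups w)) /\ all (vee_wedge w) (cups w).
Proof. by have [] := @cups_auxP w 0 [::] (esym (drop0 w)) isT isT isT. Qed.

Lemma on_cupE k : on_cup w k = (k \in cup_ends (cups w)).
Proof. by rewrite mem_cup_ends. Qed.

Lemma cups_maximal i j :
  i < j -> j < size w -> lab w i -> ~~ lab w j -> on_cup w i || on_cup w j.
Proof.
move=> lt_ij j_lt i_vee j_wedge; rewrite !on_cupE.
have [j_in|j_free] := boolP (j \in cup_ends (cups w)); first by rewrite orbT.
by rewrite (cups_aux_maximal (esym (drop0 w)) _ j_wedge j_free) //= ?lt_ij ?i_vee ?j_lt.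
Qed.

Lemma vee_wedge_cups c : c \in cups w -> vee_wedge w c.
Proof. exact: (allP (proj2 cupsP)). Qed.

Lemma cup_ends_lt k : k \in cup_ends (cups w) -> k < size w.
Proof.
rewrite mem_cup_ends => /hasP [c /vee_wedge_cups /and4P [lt_c c2_lt _ _] c_k].
by case/orP: c_k => /eqP <-; [apply: ltn_trans c2_lt|].
Qed.

Lemma mem_rays k : (k \in rays w) = (k < size w) && ~~ on_cup w k.
Proof. by rewrite mem_filter mem_iota andbC. Qed.

Lemma perm_cup_ends_rays : perm_eq (iota 0 (size w)) (cup_ends (cups w) ++ rays w).
Proof.
have rays_filter : rays w = filter (predC (mem (cup_ends (cups w)))) (iota 0 (size w)).
  by apply: eq_filter => k; rewrite /= on_cupE.
rewrite -(perm_filterC (mem (cup_ends (cups w)))).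
rewrite rays_filter perm_cat2r uniq_perm ?filter_uniq ?iota_uniq ?(proj1 cupsP) // => k.
by rewrite mem_filter mem_iota /=; case: (boolP (k \in _)) => // /cup_ends_lt ->.
Qed.

Lemma side_ok_sorted_rays a : side_ok w a -> sorted implb [seq lab a k | k <- rays w].
Proof.
case/andP => _ /allP rays_ok; rewrite sorted_pairwise; last by do 3!case.
have : pairwise ltn (rays w).
  rewrite -sorted_pairwise; last exact: ltn_trans.
  exact: (sorted_filter ltn_trans _ (iota_ltn_sorted 0 (size w))).
rewrite pairwise_map; apply: (sub_in_pairwise (P := mem (rays w))); last exact/allP.
move=> i j i_ray j_ray lt_ij; have := allP (rays_ok i i_ray) j j_ray.
by move: lt_ij => /= ->; rewrite /= -negb_imply negbK.
Qed.

Lemma side_ok_refl : side_ok w w.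
Proof.
apply/andP; split.
  by apply/allP => c /vee_wedge_cups /and4P [_ _ -> /negbTE ->].
apply/allP => i; rewrite mem_rays => /andP [_ i_free]; apply/allP => j.
rewrite mem_rays => /andP [j_lt j_free]; apply/negP => /and3P [lt_ij i_vee j_wedge].
by have := cups_maximal lt_ij j_lt i_vee j_wedge; rewrite (negbTE i_free) (negbTE j_free).
Qed.

Lemma nclockwise_refl : nclockwise w w = 0.
Proof.
apply/eqP; rewrite -leqn0 leqNgt -has_count.
by apply/hasPn => c /vee_wedge_cups /and4P [_ _ -> _].
Qed.

Lemma cups_share_end c d k : c \in cups w -> d \in cups w ->
  (c.1 == k) || (c.2 == k) -> (d.1 == k) || (d.2 == k) -> c = d.
Proof. exact: cup_ends_inj (proj1 cupsP). Qed.

Lemma cup_swap_at_side_ok c : c \in cups w ->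
  side_ok w (swap_at w c.1 c.2) && (nclockwise w (swap_at w c.1 c.2) == 1).
Proof.
move=> c_in; set s := swap_at w c.1 c.2.
have /and4P [lt_c c2_lt c1_vee c2_wedge] := vee_wedge_cups c_in.
have lab_off k : k < size w -> ~~ ((c.1 == k) || (c.2 == k)) -> lab s k = lab w k.
  by move=> k_lt /norP [c1k c2k]; rewrite lab_swap_at // eq_sym (negbTE c1k) eq_sym (negbTE c2k).
have lab_other d : d \in cups w -> d != c -> lab s d.1 = lab w d.1 /\ lab s d.2 = lab w d.2.
  move=> d_in d_neq; have /and4P [lt_d d2_lt _ _] := vee_wedge_cups d_in.
  have off k : (d.1 == k) || (d.2 == k) -> ~~ ((c.1 == k) || (c.2 == k)).
    by move=> d_k; apply: contra d_neq => c_k; rewrite (cups_share_end d_in c_in d_k c_k).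
  by split; apply: lab_off; rewrite ?off ?eqxx ?orbT //; apply: ltn_trans d2_lt.
have s_c1 : lab s c.1 = false.
  by rewrite lab_swap_at ?eqxx ?(negbTE c2_wedge) //; apply: ltn_trans c2_lt.
have s_c2 : lab s c.2 = true by rewrite lab_swap_at // eqxx gtn_eqF.
have s_clockwise d : d \in cups w -> ~~ lab s d.1 = (d == c).
  move=> d_in; case: eqVneq => [->|d_neq]; first by rewrite s_c1.
  by have [-> _] := lab_other d d_in d_neq; have /and4P [_ _ -> _] := vee_wedge_cups d_in.
have lab_rays k : k \in rays w -> lab s k = lab w k.
  rewrite mem_rays => /andP [k_lt k_free]; apply: lab_off => //; apply: contra k_free => c_k.
  by apply/hasP; exists c.
rewrite -andbA; apply/and3P; split.
- apply/allP => d d_in; case: (eqVneq d c) => [->|d_neq]; first by rewrite s_c1 s_c2.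
  have [-> ->] := lab_other d d_in d_neq.
  by have /and4P [_ _ -> /negbTE ->] := vee_wedge_cups d_in.
- have /andP [_ rays_ok] := side_ok_refl.
  apply/allP => i i_ray; apply/allP => j j_ray; rewrite !lab_rays //.
  exact: allP (allP rays_ok i i_ray) j j_ray.
- rewrite /nclockwise (eq_in_count s_clockwise).
  by rewrite (count_uniq_mem _ (cup_ends_uniq (proj1 cupsP))) c_in.
Qed.

End CupDiagram.

Section Labelling.

Variables w a : seq bool.
Hypothesis size_a : size a = size w.
Hypothesis count_a : count id a = count id w.
Hypothesis a_ok : side_ok w a.

Let cups_oriented : all (fun c => lab a c.1 != lab a c.2) (cups w).
Proof. by case/andP: a_ok. Qed.

Lemma lab_rays : {in rays w, lab a =1 lab w}.
Proof.
have count_split x : size x = size w -> all (fun c => lab x c.1 != lab x c.2) (cups w) ->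
    count id x = size (cups w) + count (lab x) (rays w).
  move=> size_x x_ok.
  by rewrite count_id_lab size_x (permP (perm_cup_ends_rays w)) count_cat count_cup_ends.
apply/eq_in_map/sorted_implb_eq; rewrite ?size_map ?side_ok_sorted_rays ?side_ok_refl //.
rewrite !count_map; apply: (@addnI (size (cups w))).
by rewrite -!count_split //; case/andP: (side_ok_refl w).
Qed.

Lemma lab_ccw_cup c k : c \in cups w -> lab a c.1 -> (c.1 == k) || (c.2 == k) ->
  lab a k = lab w k.
Proof.
move=> c_in a_c1 c_k; have /and4P [_ _ w_c1 /negbTE w_c2] := vee_wedge_cups c_in.
have a_c2 : lab a c.2 = false.
  by have := allP cups_oriented c c_in; rewrite a_c1; case: (lab a c.2).
by case/orP: c_k => /eqP <-; rewrite ?a_c1 ?w_c1 ?a_c2 ?w_c2.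
Qed.

Lemma eq_of_nclockwise0 : nclockwise w a = 0 -> a = w.
Proof.
move=> ncw0; apply: (@eq_from_nth _ false) => // k; rewrite size_a => k_lt.
have [/hasP [c c_in c_k]|k_free] := boolP (on_cup w k); last first.
  by apply: lab_rays; rewrite mem_rays k_lt.
apply: (lab_ccw_cup c_in _ c_k); apply/idPn => a_c1.
by move/eqP: ncw0; rewrite -leqn0 leqNgt -has_count => /hasPn /(_ c c_in); rewrite a_c1.
Qed.

Lemma cup_swap_of_nclockwise1 : nclockwise w a = 1 -> cup_swap w a.
Proof.
move=> ncw1; have /hasP [c c_in a_c1] : has (fun c => ~~ lab a c.1) (cups w).
  by rewrite has_count; move: ncw1; rewrite /nclockwise => ->.
have ccw_others d : d \in cups w -> d != c -> lab a d.1.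
  move=> d_in d_neq; apply/idPn => a_d1.
  have : size [:: d; c] <= nclockwise w a.
    rewrite /nclockwise -size_filter; apply: uniq_leq_size; first by rewrite /= inE d_neq.
    by move=> x; rewrite !inE mem_filter => /orP [] /eqP ->; apply/andP.
  by rewrite ncw1.
apply/hasP; exists c => //; apply/eqP.
have /and4P [lt_c c2_lt w_c1 /negbTE w_c2] := vee_wedge_cups c_in.
apply: (@eq_from_nth _ false); rewrite ?size_swap_at // => k; rewrite size_a => k_lt.
change (lab a k = lab (swap_at w c.1 c.2) k); rewrite lab_swap_at //.
case: (eqVneq k c.1) => [->|k_neq_c1]; first by rewrite w_c2; apply/negbTE.
case: (eqVneq k c.2) => [->|k_neq_c2].
  by have := allP cups_oriented c c_in; rewrite w_c1; case: (lab a c.1) a_c1; case: (lab a c.2).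
have [/hasP [d d_in d_k]|k_free] := boolP (on_cup w k); last first.
  by apply: lab_rays; rewrite mem_rays k_lt.
apply: (lab_ccw_cup d_in _ d_k); apply: ccw_others d_in _.
by apply: contraTneq d_k => ->; rewrite !(eq_sym _ k) (negbTE k_neq_c1) (negbTE k_neq_c2).
Qed.

End Labelling.

Lemma cup_swapE w a : size a = size w -> count id a = count id w ->
  cup_swap w a = side_ok w a && (nclockwise w a == 1).
Proof.
move=> size_a count_a; apply/idP/idP => [/hasP [c c_in /eqP ->]|/andP [a_ok /eqP]].
  exact: cup_swap_at_side_ok.
exact: cup_swap_of_nclockwise1.
Qed.

Lemma cup_swap_asym a b : cup_swap a b -> ~~ cup_swap b a.
Proof.
case/hasP => c c_in /eqP b_def; apply/hasP => -[d d_in /eqP a_def].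
have /and4P [lt_c c2_lt a_c1 /negbTE a_c2] := vee_wedge_cups c_in.
have /and4P [lt_d d2_lt b_d1 /negbTE b_d2] := vee_wedge_cups d_in.
have size_b : size b = size a by rewrite b_def size_swap_at.
have a_d1 : lab a d.1 = false.
  by rewrite {1}a_def lab_swap_at ?eqxx //; apply: ltn_trans d2_lt.
have a_d2 : lab a d.2 = true by rewrite {1}a_def lab_swap_at // eqxx gtn_eqF.
move: b_d1 b_d2; rewrite b_def !lab_swap_at -?size_b //; last by apply: ltn_trans d2_lt.
case: (eqVneq d.1 c.1) => [_|_]; first by rewrite a_c2.
case: (eqVneq d.1 c.2) => [d1_c2|_]; last by rewrite a_d1.
by rewrite !gtn_eqF ?a_d2 ?(ltn_trans lt_c) -?d1_c2.
Qed.

Lemma arc_diagram_degree1E alpha lam beta :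
  size lam = size alpha -> size beta = size alpha ->
  count id lam = count id alpha -> count id beta = count id alpha ->
  arc_diagram alpha lam beta && (degree alpha lam beta == 1) =
  ((lam == alpha) && cup_swap beta alpha) || ((lam == beta) && cup_swap alpha beta).
Proof.
move=> size_lam size_beta count_lam count_beta.
have [size_lam_beta count_lam_beta] : size lam = size beta /\ count id lam = count id beta.
  by rewrite size_lam size_beta count_lam count_beta.
apply/idP/idP.
  case/andP => /andP [alpha_ok beta_ok]; rewrite /degree.
  case ncw_alpha: (nclockwise alpha lam) => [|[|//]] /= ncw_beta.
    have lam_alpha := eq_of_nclockwise0 size_lam count_lam alpha_ok ncw_alpha.
    by rewrite lam_alpha eqxx cup_swapE // -lam_alpha beta_ok ncw_beta.
  have lam_beta : lam = beta.
    by apply: eq_of_nclockwise0 => //; move: ncw_beta; rewrite add1n eqSS => /eqP.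
  by rewrite lam_beta eqxx (@cup_swapE alpha beta) // -lam_beta alpha_ok ncw_alpha orbT.
case/orP => /andP [/eqP -> swap]; rewrite cup_swapE // in swap; case/andP: swap => ok /eqP ncw;
  by rewrite /arc_diagram /degree side_ok_refl ok nclockwise_refl ncw.
Qed.

Theorem lemma2p5 (m n : nat) (hm : 1 <= m) (hn : 1 <= n)
    (alpha beta : (m + n).-tuple bool) :
  alpha \in Lambda m n -> beta \in Lambda m n ->
  n_arrows alpha beta = (if gamma_edge alpha beta then 1 else 0).
Proof.
move=> alpha_in beta_in.
have count_Lambda t : t \in Lambda m n -> count id t = m by rewrite inE => /eqP.
have arcsE lam :
    lam \in [set lam in Lambda m n | arc_diagram alpha lam beta && (degree alpha lam beta == 1)] =
    ((lam == alpha) && cup_swap beta alpha) || ((lam == beta) && cup_swap alpha beta).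
  rewrite inE; have [lam_in|lam_notin] /= := boolP (lam \in Lambda m n).
    by rewrite arc_diagram_degree1E ?size_tuple ?count_Lambda.
  by apply/esym/norP; split; apply: contraNN lam_notin => /andP [/eqP -> _].
rewrite /n_arrows /gamma_edge.
have [ba|not_ba] := boolP (cup_swap beta alpha).
  rewrite orbT (@eq_card _ _ [set alpha]) ?cards1 // => lam.
  by rewrite arcsE ba (negbTE (cup_swap_asym ba)) inE andbT andbF orbF.
have [ab|not_ab] := boolP (cup_swap alpha beta).
  rewrite (@eq_card _ _ [set beta]) ?cards1 // => lam.
  by rewrite arcsE (negbTE not_ba) ab inE andbT andbF.
apply: eq_card0 => lam.
by rewrite arcsE (negbTE not_ba) (negbTE not_ab) !andbF.
Qed.
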